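(* Under the standing assumptions of the context, \[ \sum_{\ell\in\mathbb N:\ \mathcal K_\ell\ne\emptyset}\frac1\ell<\infty . \]
   Context: Standing assumptions: $A=\{0,1\}$, $\Sigma=A^{\mathbb N_0}$ with metric $\rho(y,z)=2^{-\min\{i\ge0:\,y_i\ne z_i\}}$ ($y\ne z$) and shift $\sigma$. $\zeta:A\to A^*$ is a binary substitution of constant length $q\ge2$, primitive (for some $k$, every letter occurs in $\zeta^k(a)$ for all $a$), aperiodic (its subshift $X_\zeta$ contains a non-$\sigma$-periodic sequence), with $\zeta(0)$ starting with $0$; $x=\lim_k\zeta^k(0)$ is its fixed point starting with $0$. In the infinite recurrence plot $R(x,\infty,1/2)$ (indices $i,j\in\mathbb N_0$, entry $1$ iff $x_i=x_j$), a line of length $\ell$ is $(i,j,\ell)$ with $i\ne j$, entries $(i+k,j+k)=1$ for $0\le k<\ell$, entry $(i-1,j-1)=0$ if $\min\{i,j\}>0$, entry $(i+\ell,j+\ell)=0$; it is inner if $\min\{i,j\}>0$. $\mathcal K_\ell=\{(i,j)\in\mathbb N^2:(i,j,\ell)\text{ is an inner line in }R(x,\infty,1/2)\}$. *)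

From mathcomp Require Import all_boot all_order all_algebra.
From mathcomp Require Import all_classical all_reals all_analysis.
From mathcomp Require Import Rstruct Rstruct_topology.
Set Implicit Arguments. Unset Strict Implicit. Unset Printing Implicit Defensive.

(* Alphabet A = {0,1} is encoded as bool, with 0 = false and 1 = true.
   Sequences in Sigma = A^{N_0} are functions nat -> bool. *)

Definition subst_word (zeta : bool -> seq bool) (w : seq bool) : seq bool :=
  flatten (map zeta w).

Definition subst_iter (zeta : bool -> seq bool) (k : nat) (w : seq bool) :=
  iter k (subst_word zeta) w.

Definition const_length (zeta : bool -> seq bool) (q : nat) : Prop :=
  forall a : bool, size (zeta a) = q.

Definition primitive (zeta : bool -> seq bool) : Prop :=
  exists k : nat, forall a b : bool, b \in subst_iter zeta k [:: a].

Definition window (y : nat -> bool) (n m : nat) : seq bool :=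
  mkseq (fun i => y (n + i)) m.

Definition in_subshift (zeta : bool -> seq bool) (y : nat -> bool) : Prop :=
  forall n m : nat, exists (k : nat) (a : bool),
    infix (window y n m) (subst_iter zeta k [:: a]).

Definition shift_periodic (y : nat -> bool) : Prop :=
  exists p : nat, 0 < p /\ forall i, y (i + p) = y i.

Definition aperiodic (zeta : bool -> seq bool) : Prop :=
  exists y : nat -> bool, in_subshift zeta y /\ ~ shift_periodic y.

(* x = lim_k zeta^k(0): every zeta^k(0) is a prefix of x *)
Definition is_limit_fixed_point (zeta : bool -> seq bool) (x : nat -> bool) : Prop :=
  forall k i : nat, i < size (subst_iter zeta k [:: false]) ->
    x i = nth false (subst_iter zeta k [:: false]) i.

(* entry (i,j) of the infinite recurrence plot R(x, oo, 1/2):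
   1 iff x_i = x_j *)
Definition RP (x : nat -> bool) (i j : nat) : bool := x i == x j.

Definition is_line (x : nat -> bool) (i j l : nat) : Prop :=
  [/\ i != j,
      (forall k, k < l -> RP x (i + k) (j + k)),
      (0 < minn i j -> ~~ RP x i.-1 j.-1)
    & ~~ RP x (i + l) (j + l)].

Definition in_K (x : nat -> bool) (l i j : nat) : Prop :=
  [/\ 0 < i, 0 < j, 0 < minn i j & is_line x i j l].

Definition K_nonempty (x : nat -> bool) (l : nat) : Prop :=
  exists i j : nat, in_K x l i j.

From mathcomp Require Import all_boot all_order all_algebra.
From mathcomp Require Import all_classical all_reals all_analysis.
From mathcomp Require Import Rstruct Rstruct_topology.
From mathcomp Require Import zify lra.
Import Order.TTheory GRing.Theory Num.Theory.

(* Position [q s + r] of the fixed point [x] carries letter [r] of [zeta (x s)].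
   Call a column [r] distinguishing when [zeta 0] and [zeta 1] differ there;
   such columns exist because [x] is not periodic.  If [x] agrees with itself
   along a long run between positions [i], [j] with [i <> j (mod q)], the blocks
   of [zeta] on both sides are shifted by some [0 < e < q], and comparing the
   least and greatest distinguishing columns forces a long 2-periodic factor of
   [x]; since [x] is uniformly recurrent, arbitrarily long such factors would
   make [x] periodic.  Hence every long line starts at congruent positions, and
   then it is the image of a line of length [m] between the enclosing blocks,
   of length [q m + c0] for a constant [c0 < q].  For the partial sums [A_n] of
   the series this gives [A_n <= H + A_n / q], with [H] the sum of [1/l] over
   the short lengths, so [A_n <= 2 H]. *)

Set Implicit Arguments.
Unset Strict Implicit.
Unset Printing Implicit Defensive.

Section ConstantLength.

Variables (zeta : bool -> seq bool) (q : nat).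
Hypothesis zeta_q : const_length zeta q.

Lemma subst_iterS k w :
  subst_iter zeta k.+1 w = subst_word zeta (subst_iter zeta k w).
Proof. by rewrite /subst_iter iterS. Qed.

Lemma size_subst_word w : size (subst_word zeta w) = q * size w.
Proof.
elim: w => [|a w IH]; first by rewrite muln0.
by rewrite /subst_word /= size_cat -/(subst_word zeta w) IH zeta_q mulnS.
Qed.

Lemma size_subst_iter k w : size (subst_iter zeta k w) = q ^ k * size w.
Proof.
elim: k => [|k IH]; first by rewrite mul1n.
by rewrite subst_iterS size_subst_word IH expnS mulnA.
Qed.

Lemma size_subst_iter1 k a : size (subst_iter zeta k [:: a]) = q ^ k.
Proof. by rewrite size_subst_iter muln1. Qed.

Lemma nth_subst_word w t r : t < size w -> r < q ->
  nth false (subst_word zeta w) (q * t + r) = nth false (zeta (nth false w t)) r.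
Proof.
elim: w t => [|a w IH] [|t] //= ht hr; rewrite /subst_word /= nth_cat zeta_q.
  by rewrite muln0 hr.
rewrite ifN -?leqNgt ?mulnS -?addnA ?leq_addr // addKn; exact: IH.
Qed.

End ConstantLength.

Definition distinguishing (zeta : bool -> seq bool) (r : nat) : bool :=
  nth false (zeta false) r != nth false (zeta true) r.

Section Columns.

Variable zeta : bool -> seq bool.

Lemma distinguishing_nth r c : distinguishing zeta r ->
  nth false (zeta c) r = nth false (zeta false) r (+) c.
Proof. by rewrite /distinguishing; case: c; case: (nth _ _ r); case: (nth _ _ r). Qed.

Lemma nondistinguishing_nth r c : ~~ distinguishing zeta r ->
  nth false (zeta c) r = nth false (zeta false) r.
Proof. by rewrite /distinguishing negbK; case: c => // /eqP. Qed.

Lemma distinguishing_nth_inj r c c' : distinguishing zeta r ->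
  nth false (zeta c) r = nth false (zeta c') r -> c = c'.
Proof.
by move=> dr; rewrite (distinguishing_nth c dr) (distinguishing_nth c' dr) => /addbI.
Qed.

Lemma nth_neq_distinguishing r c c' :
  nth false (zeta c) r != nth false (zeta c') r -> distinguishing zeta r /\ c != c'.
Proof.
by rewrite /distinguishing; case: c; case: c' => //=; rewrite ?eqxx // eq_sym.
Qed.

End Columns.

Section ShiftedBlocks.

Variables (zeta : bool -> seq bool) (q e n : nat) (a b : nat -> bool).
Hypotheses (e_gt0 : 0 < e) (e_lt_q : e < q).
Hypothesis shifted : forall k r, k < n -> r < q ->
  nth false (zeta (a k)) r = nth false (zeta (b (k + (r + e) %/ q))) ((r + e) %% q).

Lemma shifted_blocks_const r : r < q -> distinguishing zeta r ->
  ~~ distinguishing zeta ((r + e) %% q) -> exists c, forall k, k < n -> a k = c.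
Proof.
move=> hr dr ndr.
exists (nth false (zeta false) r (+) nth false (zeta false) ((r + e) %% q)) => k hk.
move: (shifted hk hr).
by rewrite distinguishing_nth // nondistinguishing_nth // => <-; rewrite addKb.
Qed.

Lemma shifted_blocks_xor r : r < q -> distinguishing zeta r ->
  distinguishing zeta ((r + e) %% q) ->
  exists c, forall k, k < n -> a k (+) b (k + (r + e) %/ q) = c.
Proof.
move=> hr dr dr'.
exists (nth false (zeta false) r (+) nth false (zeta false) ((r + e) %% q)) => k hk.
move: (shifted hk hr).
rewrite (distinguishing_nth _ dr) (distinguishing_nth _ dr').
by case: (a k); case: (b (k + _)); case: (nth _ _ r); case: (nth _ _ ((r + e) %% q)).
Qed.

(* If distinguishing columns are mapped to distinguishing columns, the least
   one stays in its block and the greatest one moves to the next block: the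
   sums [a k + b k] and [a k + b k.+1] are then both constant. *)
Lemma shifted_blocks_2periodic : (exists2 r, r < q & distinguishing zeta r) ->
  forall k, k.+2 < n -> a k.+2 = a k.
Proof.
move=> [r0 hr0 d0] k hk.
pose lost r := distinguishing zeta r && ~~ distinguishing zeta ((r + e) %% q).
have [/hasP [r] | /hasPn kept] := boolP (has lost (iota 0 q)).
  rewrite mem_iota => /andP [_ hr] /andP [dr ndr].
  by have [c E] := shifted_blocks_const hr dr ndr; rewrite !E //; lia.
have {}kept r : r < q -> distinguishing zeta r -> distinguishing zeta ((r + e) %% q).
  by move=> hr dr; move: (kept r); rewrite /lost mem_iota hr dr /= => /(_ isT); rewrite negbK.
have exP : exists r, (r < q) && distinguishing zeta r by exists r0; rewrite hr0.
have [r1 /andP [hr1 d1] min1] := ex_minnP exP.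
have ubP r : (r < q) && distinguishing zeta r -> r <= q by case/andP => /ltnW.
have [r2 /andP [hr2 d2] max2] := ex_maxnP exP ubP.
have q_gt0 : 0 < q := ltn_trans e_gt0 e_lt_q.
have r1_stays : (r1 + e) %/ q = 0.
  by have := min1 ((r1 + e) %% q); rewrite ltn_mod q_gt0 kept // => /(_ isT) ?; nia.
have r2_moves : (r2 + e) %/ q = 1.
  by have := max2 ((r2 + e) %% q); rewrite ltn_mod q_gt0 kept // => /(_ isT) ?; nia.
have [c1 E1] := shifted_blocks_xor hr1 d1 (kept _ hr1 d1).
have [c2 E2] := shifted_blocks_xor hr2 d2 (kept _ hr2 d2).
move: (E1 k.+2 hk) (E1 k.+1 (ltnW hk)) (E2 k.+1 (ltnW hk)) (E2 k (ltnW (ltnW hk))).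
rewrite r1_stays r2_moves !addn0 !addn1; clear E1 E2.
by case: (a k.+2); case: (a k.+1); case: (a k); case: (b k.+2); case: (b k.+1);
  case: c1; case: c2.
Qed.

End ShiftedBlocks.

Section FixedPoint.

Variables (zeta : bool -> seq bool) (q : nat) (x : nat -> bool).
Hypotheses (q_gt1 : 1 < q) (zeta_q : const_length zeta q).
Hypothesis x_fixed : is_limit_fixed_point zeta x.
Arguments x_fixed : clear implicits.

Lemma fixed_point_block s r : r < q -> x (q * s + r) = nth false (zeta (x s)) r.
Proof.
move=> hr; set k := q * s + r.
have hk : k < q ^ k := ltn_expl _ q_gt1.
have hs : s < q ^ k by apply: leq_ltn_trans hk; rewrite /k; nia.
rewrite (x_fixed k.+1) ?(size_subst_iter1 zeta_q) ?expnS; last by nia.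
rewrite subst_iterS (nth_subst_word zeta_q) ?(size_subst_iter1 zeta_q) //.
by rewrite -x_fixed ?(size_subst_iter1 zeta_q).
Qed.

Lemma fixed_point_iter_block m s r : r < q ^ m ->
  x (q ^ m * s + r) = nth false (subst_iter zeta m [:: x s]) r.
Proof.
elim: m s r => [|m IH] s r; first by rewrite ltnS leqn0 => /eqP ->; rewrite mul1n addn0.
move=> hr; have q_gt0 : 0 < q by apply: ltnW.
have -> : q ^ m.+1 * s + r = q * (q ^ m * s + r %/ q) + r %% q.
  by rewrite {1}(divn_eq r q) expnS mulnDr mulnA addnA [_ * q]mulnC.
rewrite fixed_point_block ?ltn_mod // IH ?ltn_divLR -?expnSr //.
rewrite subst_iterS {3}(divn_eq r q) [_ * q]mulnC (nth_subst_word zeta_q) ?ltn_mod //.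
by rewrite (size_subst_iter1 zeta_q) ltn_divLR -?expnSr.
Qed.

Lemma fixed_point_mismatch s t r : r < q -> x (q * s + r) != x (q * t + r) ->
  distinguishing zeta r /\ x s != x t.
Proof. by move=> hr; rewrite !fixed_point_block //; exact: nth_neq_distinguishing. Qed.

Lemma fixed_point_agreement s t r : r < q -> distinguishing zeta r ->
  x (q * s + r) = x (q * t + r) -> x s = x t.
Proof. by move=> hr dr; rewrite !fixed_point_block //; exact: distinguishing_nth_inj. Qed.

Lemma line_block_agreement i j l s t r : i = q * s + r + 1 -> j = q * t + r + 1 ->
  (forall p, p < l -> RP x (i + p) (j + p)) -> forall k rr, rr < q ->
  distinguishing zeta rr -> r < q * k + rr <= r + l -> x (s + k) = x (t + k).
Proof.
move=> -> -> run k rr hrr drr /andP [k_lo k_hi].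
apply: (fixed_point_agreement hrr drr); set p := q * k + rr - r - 1.
have p_lt : p < l by rewrite /p; lia.
have -> : q * (s + k) + rr = q * s + r + 1 + p by rewrite /p mulnDr; lia.
have -> : q * (t + k) + rr = q * t + r + 1 + p by rewrite /p mulnDr; lia.
exact/eqP/run.
Qed.

(* An inner line between positions congruent mod [q] starts just after a
   mismatch in the greatest distinguishing column [hi] and stops at a mismatch
   in the least one [lo]; the complete blocks in between form a line of [x]. *)
Lemma aligned_line_desubstitutes lo hi l i j :
  distinguishing zeta lo -> (forall r, (r < q) && distinguishing zeta r -> lo <= r) ->
  hi < q -> distinguishing zeta hi ->
  (forall r, (r < q) && distinguishing zeta r -> r <= hi) ->
  in_K x l i j -> i %% q = j %% q -> q < l ->
  exists2 m, K_nonempty x m & l = q * m + (q + lo - hi - 1).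
Proof.
move=> dlo lo_min hi_lt dhi hi_max [i_gt0 j_gt0 _ [_ run left right]] aligned long.
have q_gt0 : 0 < q by lia.
have [s [r [t [hr ei ej]]]] :
    exists s r t, [/\ r < q, i = q * s + r + 1 & j = q * t + r + 1].
  have ij1 : i.-1 %% q = j.-1 %% q.
    by apply/eqP; rewrite -(eqn_modDr 1) !addn1 !prednK // aligned.
  exists (i.-1 %/ q), (i.-1 %% q), (j.-1 %/ q); rewrite ltn_mod q_gt0.
  by have := divn_eq i.-1 q; have := divn_eq j.-1 q; rewrite ij1; split => //; lia.
clear aligned.
have [dr st] : distinguishing zeta r /\ x s != x t.
  apply: fixed_point_mismatch hr _; move: left.
  by rewrite leq_min i_gt0 j_gt0 /RP ei ej !addn1 => /(_ isT).
have [s' [r' [hr' ei']]] : exists s' r', r' < q /\ i + l = q * s' + r'.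
  by exists ((i + l) %/ q), ((i + l) %% q); rewrite ltn_mod [q * _]mulnC -divn_eq.
have [m es'] : exists m, s' = s + m.+1.
  suff : s < s' by exists (s' - s.+1); lia.
  by rewrite -(ltn_pmul2l q_gt0); lia.
rewrite es' mulnDr in ei'.
have ej' : j + l = q * (t + m.+1) + r' by rewrite mulnDr; lia.
have [dr' st'] : distinguishing zeta r' /\ x (s + m.+1) != x (t + m.+1).
  by apply: fixed_point_mismatch hr' _; rewrite mulnDr -ei' -ej'.
have agree := line_block_agreement ei ej run.
have r_hi : r = hi.
  apply/eqP; rewrite eqn_leq hi_max ?hr ?dr //= leqNgt; apply/negP => r_lt.
  by move/eqP: st; apply; rewrite -[s]addn0 -[t]addn0; apply: (agree 0 hi) => //; lia.
have r'_lo : r' = lo.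
  apply/eqP; rewrite eqn_leq lo_min ?hr' ?dr' // andbT leqNgt; apply/negP => lo_lt.
  by move/eqP: st'; apply; apply: (agree m.+1 lo) => //; lia.
exists m; last by lia.
exists s.+1, t.+1; split; rewrite ?leq_min //; split.
- by rewrite eqSS; apply: contraNneq st => ->.
- move=> k hk; have kq : q * k.+1 <= q * m by rewrite leq_mul2l hk orbT.
  by rewrite /RP !addSnnS; apply/eqP; apply: (agree k.+1 hi) => //; lia.
- by move=> _; exact: st.
- by rewrite /RP !addSnnS.
Qed.

Hypothesis zeta_prim : primitive zeta.

Lemma fixed_point_letter_occurs a : exists s, x s = a.
Proof.
have [p hp] := zeta_prim; exists (index a (subst_iter zeta p [:: false])).
by rewrite (x_fixed p) ?nth_index ?index_mem.
Qed.

(* Every window of [y] is a window of some [zeta^k(a)], hence of [x] at a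
   position [q^k s + o] with [x s = a]. *)
Lemma subshift_periodic_of_fixed_point_periodic y :
  shift_periodic x -> in_subshift zeta y -> shift_periodic y.
Proof.
move=> [P [P_gt0 xP]] y_sub; exists P; split => // n.
have [k [a /infixP [pre [suf y_win]]]] := y_sub n P.+1.
have [s xs] := fixed_point_letter_occurs a.
have y_in_x r : r < P.+1 -> y (n + r) = x (q ^ k * s + (size pre + r)).
  move=> hr; rewrite fixed_point_iter_block //; last first.
    rewrite -(size_subst_iter1 zeta_q k a) y_win !size_cat size_mkseq.
    by rewrite ltn_add2l ltn_addr.
  rewrite xs y_win (nth_cat _ pre) ltnNge leq_addr addKn.
  by rewrite nth_cat size_mkseq hr nth_mkseq.
by rewrite y_in_x // -[n]addn0 y_in_x // addn0 addnA xP.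
Qed.

Lemma fixed_point_not_periodic : aperiodic zeta -> ~ shift_periodic x.
Proof.
move=> [y [y_sub y_aper]] x_per; apply: y_aper.
exact: subshift_periodic_of_fixed_point_periodic.
Qed.

Lemma fixed_point_prefix_copy m s r : x s = false -> r < q ^ m ->
  x (q ^ m * s + r) = x r.
Proof.
move=> xs hr.
by rewrite fixed_point_iter_block // xs -x_fixed ?(size_subst_iter1 zeta_q).
Qed.

Lemma fixed_point_uniformly_recurrent M : exists G, forall s, exists c,
  [/\ s <= c, c + M <= s + G & forall r, r < M -> x (c + r) = x r].
Proof.
have [p hp] := zeta_prim; set Q := q ^ (M + p).
have Q_gt0 : 0 < Q by rewrite expn_gt0; lia.
have M_lt : M < q ^ M := ltn_expl _ q_gt1.
exists (2 * Q) => s; set sg := s %/ Q + 1.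
have [d hd xd] : exists2 d, d < q ^ p & x (q ^ p * sg + d) = false.
  have hin := hp (x sg) false; exists (index false (subst_iter zeta p [:: x sg])).
    by rewrite -(size_subst_iter1 zeta_q p (x sg)) index_mem.
  rewrite fixed_point_iter_block ?nth_index //.
  by rewrite -(size_subst_iter1 zeta_q p (x sg)) index_mem.
have Qsg : s < Q * sg <= s + Q.
  rewrite /sg mulnDr muln1 mulnC.
  by have := divn_eq s Q; have := ltn_mod s Q; rewrite Q_gt0; lia.
have hqo : q ^ M * d + q ^ M <= Q by rewrite /Q expnD -mulnSr leq_mul2l hd orbT.
exists (Q * sg + q ^ M * d); split; [lia | lia |] => r hr.
have -> : Q * sg + q ^ M * d + r = q ^ M * (q ^ p * sg + d) + r.
  by rewrite /Q expnD mulnDr mulnA.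
by rewrite fixed_point_prefix_copy //; lia.
Qed.

Lemma periodic_of_long_periodic_factors p :
  (forall M, exists s, forall k, k < M -> x (s + k + p) = x (s + k)) ->
  forall n, x (n + p) = x n.
Proof.
move=> long n.
have [G rec] := fixed_point_uniformly_recurrent (n + p).+1.
have [s per] := long G; have [c [sc cG copy]] := rec s.
rewrite -copy // -(copy n); last by lia.
have -> : c + (n + p) = s + (c - s + n) + p by lia.
have -> : c + n = s + (c - s + n) by lia.
apply: per; lia.
Qed.

Hypothesis zeta_aper : aperiodic zeta.

Lemma exists_distinguishing : exists2 r, r < q & distinguishing zeta r.
Proof.
have [/hasP [r] | /hasPn same] := boolP (has (distinguishing zeta) (iota 0 q)).
  by rewrite mem_iota => /andP [_ hr] dr; exists r.
case: (fixed_point_not_periodic zeta_aper); exists q; split; first lia.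
move=> n; have q_gt0 : 0 < q by lia.
rewrite (divn_eq n q) [_ * q]mulnC -addnAC -mulnSr !fixed_point_block ?ltn_mod //.
have := same (n %% q); rewrite mem_iota ltn_mod q_gt0 => /(_ isT) nd.
by rewrite !(nondistinguishing_nth _ nd).
Qed.

(* Past the first complete block after [i], the two copies of [x] are blocks of
   [zeta] shifted against each other by [e], with [0 < e < q]. *)
Lemma misaligned_run_2periodic_factor i j M :
  i %% q != j %% q -> (forall p, p < q * (M + 3) -> x (i + p) = x (j + p)) ->
  exists s, forall k, k < M -> x (s + k + 2) = x (s + k).
Proof.
move=> ij run; have q_gt0 : 0 < q by lia.
set s := i %/ q + 1; set d := q * s - i.
have [id d_le_q] : i + d = q * s /\ d <= q.
  rewrite /d /s mulnDr muln1.
  by have := divn_eq i q; have := ltn_mod i q; rewrite q_gt0; lia.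
set t := (j + d) %/ q; set e := (j + d) %% q.
have e_gt0 : 0 < e.
  by rewrite lt0n; apply: contra ij => /eqP e0; rewrite -(eqn_modDr d) id modnMr -/e e0.
have shifted k r : k < M + 2 -> r < q -> nth false (zeta (x (s + k))) r =
    nth false (zeta (x (t + (k + (r + e) %/ q)))) ((r + e) %% q).
  move=> hk hr; rewrite -!fixed_point_block ?ltn_mod //.
  have := divn_eq (r + e) q; have := divn_eq (j + d) q; move=> ? ?.
  have -> : q * (s + k) + r = i + (d + q * k + r) by rewrite mulnDr; lia.
  have -> : q * (t + (k + (r + e) %/ q)) + (r + e) %% q = j + (d + q * k + r).
    by rewrite !mulnDr; lia.
  have kq : q * k.+1 <= q * (M + 2) by rewrite leq_mul2l hk orbT.
  by apply: run; lia.
have := shifted_blocks_2periodic (a := fun k => x (s + k)) (b := fun k => x (t + k))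
  e_gt0 _ shifted exists_distinguishing.
move=> /(_ (ltn_pmod _ q_gt0)) periodic; exists s => k hk.
by rewrite -addnA addn2 periodic //; lia.
Qed.

Lemma misaligned_runs_bounded : exists B, forall i j L, i %% q != j %% q ->
  (forall p, p < L -> x (i + p) = x (j + p)) -> L < B.
Proof.
apply: contrapT => unbounded.
apply: (fixed_point_not_periodic zeta_aper); exists 2; split => //.
apply: periodic_of_long_periodic_factors => M.
have [i [j [L [ij run long]]]] : exists i j L, [/\ i %% q != j %% q,
    forall p, p < L -> x (i + p) = x (j + p) & q * (M + 3) <= L].
  apply: contrapT => none; apply: unbounded; exists (q * (M + 3)) => i j L ij run.
  by rewrite ltnNge; apply/negP => long; apply: none; exists i, j, L.
by apply: (misaligned_run_2periodic_factor ij) => p hp; apply: run; lia.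
Qed.

Lemma long_line_lengths : exists c0 B, [/\ c0 < q, c0 < B &
  forall l, K_nonempty x l -> B <= l -> exists2 m, K_nonempty x m & l = q * m + c0].
Proof.
have [r0 hr0 d0] := exists_distinguishing.
have exP : exists r, (r < q) && distinguishing zeta r by exists r0; rewrite hr0.
have [lo /andP [lo_lt dlo] lo_min] := ex_minnP exP.
have ubP r : (r < q) && distinguishing zeta r -> r <= q by case/andP => /ltnW.
have [hi /andP [hi_lt dhi] hi_max] := ex_maxnP exP ubP.
have lo_hi : lo <= hi by rewrite hi_max ?lo_lt.
have [B bounded] := misaligned_runs_bounded.
exists (q + lo - hi - 1), (maxn B q.+1); split; [lia | lia | move=> l [i [j line]] long].
case: (eqVneq (i %% q) (j %% q)) => [aligned | misaligned].
  by apply: (aligned_line_desubstitutes dlo lo_min hi_lt dhi hi_max line aligned); lia.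
have [_ _ _ [_ run _ _]] := line.
by have := bounded i j l misaligned (fun p hp => eqP (run p hp)); lia.
Qed.

End FixedPoint.

Section InverseSeries.

Variables (R : realType) (S : nat -> Prop) (q c0 B : nat).
Hypotheses (q_gt1 : (1 < q)%N) (c0_lt_q : (c0 < q)%N) (c0_lt_B : (c0 < B)%N).
Hypothesis S_rec : forall l, S l -> (B <= l)%N -> exists2 m, S m & l = (q * m + c0)%N.

Local Open Scope ring_scope.

Let a l : R := if `[< S l >] then l%:R^-1 else 0.

Let a_ge0 l : 0 <= a l.
Proof. by rewrite /a; case: asboolP; rewrite ?invr_ge0. Qed.

Let a_le_inv l : a l <= l%:R^-1.
Proof. by rewrite /a; case: asboolP; rewrite ?invr_ge0. Qed.

(* Each term [a (q m + c0)] of the tail is at most [a m / q], and distinct terms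
   come from distinct [m]. *)
Lemma tail_sum_le n :
  \sum_(0 <= l < n | (B <= l)%N) a l <= (\sum_(0 <= l < n) a l) / q%:R.
Proof.
have q_gt0 : (0 < q)%N by apply: ltnW.
pose g l := if (B <= l)%N then a l else 0.
have g_ge0 l : 0 <= g l by rewrite /g; case: ifP.
rewrite big_mkcond /= -/g.
apply: le_trans (_ : \sum_(0 <= l < n * q) g l <= _).
  have mono := @nondecreasing_series R g xpredT 0 (fun l _ _ => g_ge0 l).
  by apply: mono; rewrite leq_pmulr // ltnW.
rewrite big_nat_mul mulr_suml; apply: ler_sum => m _.
have mem : (m * q + c0)%N \in index_iota (m * q) (m.+1 * q).
  by rewrite mem_index_iota mulSn; lia.
rewrite (bigD1_seq _ mem) ?iota_uniq //=.
rewrite big1_seq ?addr0; last first.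
  move=> l /andP [ne]; rewrite mem_index_iota => /andP [lo hi]; rewrite /g /a.
  case: ifP => // hB; case: asboolP => // hS; have [m' _ el] := S_rec hS hB.
  have m'm : m' = m.
    have : (q * m' < q * m.+1)%N by lia.
    have : (q * m < q * m'.+1)%N by lia.
    by rewrite !ltn_pmul2l //; lia.
  by case/negP: ne; apply/eqP; rewrite el m'm mulnC.
have am_ge0 : 0 <= a m / q%:R by rewrite divr_ge0.
rewrite /g; case: ifP => // hB; rewrite {1}/a; case: asboolP => // hS.
have [m' Sm' em] := S_rec hS hB.
have <- : m' = m by apply/eqP; rewrite -(eqn_pmul2l q_gt0); lia.
have m'_gt0 : (0 < m')%N by rewrite lt0n; apply: contraTneq hB => m'0; lia.
rewrite /a asboolT // -invfM -natrM lef_pV2 ?posrE ?ltr0n ?ler_nat; nia.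
Qed.

Lemma partial_sums_le n :
  \sum_(0 <= l < n) a l <= 2 * \sum_(0 <= l < B) (l%:R : R)^-1.
Proof.
set A := \sum_(0 <= l < n) a l; set H := \sum_(0 <= l < B) (l%:R : R)^-1.
have head : \sum_(0 <= l < n | (l < B)%N) a l <= H.
  apply: le_trans (_ : \sum_(0 <= l < n | (l < B)%N) l%:R^-1 <= _).
    by apply: ler_sum => l _; exact: a_le_inv.
  rewrite /H (big_nat_widen 0 B (maxn n B)) ?leq_maxr //.
  have mono := @nondecreasing_series R (fun l => l%:R^-1) (fun l => l < B)%N 0.
  by apply: mono; rewrite ?leq_maxl // => l _ _; rewrite invr_ge0.
have : A <= H + A / q%:R.
  rewrite {1}/A (bigID (fun l => (l < B)%N)) /=; apply: lerD head _.
  by rewrite (eq_bigl (fun l => (B <= l)%N)) ?tail_sum_le // => l; rewrite -leqNgt.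
have A_ge0 : 0 <= A by apply: sumr_ge0.
have : A / q%:R <= A / 2.
  by rewrite ler_wpM2l // lef_pV2 ?posrE ?ltr0n ?(ler_nat R 2) //; lia.
lra.
Qed.

Lemma inverse_series_finite :
  (\sum_(1 <= l <oo | `[< S l >]) ((l%:R : R)^-1)%:E < +oo)%E.
Proof.
apply: (le_lt_trans _ (ltry (2 * \sum_(0 <= l < B) (l%:R : R)^-1))).
apply: lime_le; first by apply: is_cvg_nneseries => k _ _; rewrite lee_fin invr_ge0.
apply: nearW => n; rewrite sumEFin lee_fin; apply: le_trans (partial_sums_le n).
case: n => [|n]; first by rewrite !big_geq.
rewrite (big_ltn (ltn0Sn n)) big_mkcond /= -[leLHS]add0r.
exact: lerD (a_ge0 0) (le_refl _).
Qed.

End InverseSeries.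

(* That [zeta 0] starts with [0] already follows from [is_limit_fixed_point]. *)
Theorem lemma3p2 (zeta : bool -> seq bool) (q : nat) (x : nat -> bool) :
  (2 <= q)%N ->
  const_length zeta q ->
  primitive zeta ->
  aperiodic zeta ->
  nth true (zeta false) 0 = false ->
  is_limit_fixed_point zeta x ->
  (\sum_(1 <= l <oo | `[< K_nonempty x l >]) ((l%:R : Rdefinitions.R)^-1)%:E
     < +oo)%E.
Proof.
move=> q_gt1 zeta_q zeta_prim zeta_aper _ x_fixed.
have [c0 [B [c0_lt_q c0_lt_B lengths]]] :=
  long_line_lengths q_gt1 zeta_q x_fixed zeta_prim zeta_aper.
exact: inverse_series_finite q_gt1 c0_lt_q c0_lt_B lengths.
Qed.
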